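(* Let $\tau$ be a finite topology on a finite set $X$. Then there exists a finite topology $\tau'$ on $X$ such that $G_2(\tau)\cong G_2(\tau')$ and the height of $\tau'$ is at most $2$.
   Context: A finite topology on $X$ is a family of subsets (open sets) containing $\emptyset,X$ and closed under unions and intersections. $m_\tau(x)$ is the intersection of all open sets containing $x$. The height of $\tau$ is the largest $h$ such that there are distinct $v_1,\dots,v_h\in X$ with $m_\tau(v_1)\subseteq m_\tau(v_2)\subseteq\cdots\subseteq m_\tau(v_h)$. $G_2(\tau)$ is the simple graph on $X$ in which distinct $x,y$ are adjacent iff there do not exist disjoint open sets $U_x\ni x$, $U_y\ni y$. *)

From mathcomp Require Import all_boot.
Set Implicit Arguments. Unset Strict Implicit. Unset Printing Implicit Defensive.

Definition is_topology (T : finType) (tau : {set {set T}}) : Prop :=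
  [/\ set0 \in tau, setT \in tau,
      (forall U V, U \in tau -> V \in tau -> U :|: V \in tau) &
      (forall U V, U \in tau -> V \in tau -> U :&: V \in tau)].

Definition minopen (T : finType) (tau : {set {set T}}) (x : T) : {set T} :=
  \bigcap_(U in tau | x \in U) U.

Definition has_chain (T : finType) (tau : {set {set T}}) (h : nat) : bool :=
  [exists s : h.-tuple T,
     uniq s && sorted (fun a b => minopen tau a \subset minopen tau b) s].

Definition height (T : finType) (tau : {set {set T}}) : nat :=
  \max_(h < #|T|.+1 | has_chain tau h) h.

Definition G2 (T : finType) (tau : {set {set T}}) (x y : T) : bool :=
  (x != y) &&
  ~~ [exists U in tau, exists V in tau,
        [&& x \in U, y \in V & [disjoint U & V]]].

Definition graph_iso (T : finType) (e1 e2 : T -> T -> bool) : Prop :=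
  exists f : T -> T, bijective f /\ forall x y, e1 x y = e2 (f x) (f y).

(** Two points are adjacent in [G2] exactly when their minimal open sets
    meet.  Pick one representative in each equivalence class of minimal
    points of the specialisation preorder, and keep only the relations
    "representative [r] lies below [y]": every minimal open set still
    contains the representatives below it, so adjacency is unchanged,
    while the new preorder has no chain of three distinct points. *)

From mathcomp Require Import all_boot.
Set Implicit Arguments. Unset Strict Implicit. Unset Printing Implicit Defensive.

Section MinimalOpenSets.
Variables (T : finType) (tau : {set {set T}}).
Hypothesis tau_top : is_topology tau.
Local Notation m := (minopen tau).

Lemma minopen_open x : m x \in tau.
Proof.
case: tau_top => open0 openT openU openI.
by apply: (big_ind (fun U : {set T} => U \in tau)) => // U /andP[].
Qed.

Lemma mem_minopen x : x \in m x.
Proof. by apply/bigcapP => U /andP[]. Qed.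

Lemma minopen_min U x : U \in tau -> x \in U -> m x \subset U.
Proof. by move=> openU xU; apply: bigcap_inf; rewrite openU xU. Qed.

Lemma minopen_sub a b : a \in m b -> m a \subset m b.
Proof. exact: minopen_min (minopen_open b). Qed.

Lemma G2_minopenE x y : G2 tau x y = (x != y) && ~~ [disjoint m x & m y].
Proof.
rewrite /G2; congr (_ && ~~ _); apply/existsP/idP.
- case=> U /andP[openU /existsP[V /andP[openV /and3P[xU yV dUV]]]].
  exact: disjointW (minopen_min openU xU) (minopen_min openV yV) dUV.
- move=> dxy; exists (m x); rewrite minopen_open /=; apply/existsP; exists (m y).
  by rewrite minopen_open !mem_minopen.
Qed.

Lemma height_leq n :
  (forall s : seq T, uniq s -> sorted (fun a b => m a \subset m b) s ->
     size s <= n) ->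
  height tau <= n.
Proof.
move=> chain_le; apply/bigmax_leqP => h /existsP[s /andP[us ss]].
by rewrite -(size_tuple s) chain_le.
Qed.

End MinimalOpenSets.

Section DownSets.
Variables (T : finType) (R : rel T).
Hypotheses (R_refl : reflexive R) (R_trans : transitive R).

Definition downsets : {set {set T}} :=
  [set U : {set T} | [forall x, forall y, R x y ==> (y \in U) ==> (x \in U)]].

Lemma downsetsP (U : {set T}) :
  reflect (forall x y, R x y -> y \in U -> x \in U) (U \in downsets).
Proof.
rewrite inE; apply: (iffP forallP) => [down x y Rxy yU | down x].
  by move/forallP/(_ y): (down x); rewrite Rxy yU.
by apply/forallP => y; apply/implyP => Rxy; apply/implyP; apply: down.
Qed.

Lemma downsets_top : is_topology downsets.
Proof.
split.
- by apply/downsetsP => x y _; rewrite inE.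
- by apply/downsetsP => x y _; rewrite inE.
- move=> U V /downsetsP downU /downsetsP downV; apply/downsetsP => x y Rxy.
  by rewrite !inE => /orP[/(downU _ _ Rxy) -> | /(downV _ _ Rxy) ->]; rewrite ?orbT.
- move=> U V /downsetsP downU /downsetsP downV; apply/downsetsP => x y Rxy.
  by rewrite !inE => /andP[/(downU _ _ Rxy) -> /(downV _ _ Rxy) ->].
Qed.

Lemma minopen_downsets y : minopen downsets y = [set x | R x y].
Proof.
apply/eqP; rewrite eqEsubset; apply/andP; split.
- apply: minopen_min; last by rewrite inE R_refl.
  by apply/downsetsP => x z Rxz; rewrite !inE; apply: R_trans.
- apply/subsetP => x; rewrite inE => Rxy.
  have /downsetsP down_my := minopen_open downsets_top y.
  exact: down_my Rxy (mem_minopen _ y).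
Qed.

End DownSets.

Section Flattening.
Variables (T : finType) (tau : {set {set T}}).
Hypothesis tau_top : is_topology tau.
Local Notation m := (minopen tau).

Definition minimal_point x := [forall w in m x, x \in m w].

Definition class_rep x :=
  minimal_point x && [forall w in m x, enum_rank x <= enum_rank w].

Lemma minimal_point_minopen w v : minimal_point w -> v \in m w -> m v = m w.
Proof.
move=> /forallP/(_ v)/implyP wv vw; apply/eqP.
by rewrite eqEsubset !(minopen_sub tau_top) ?wv.
Qed.

Lemma exists_minimal_point_below y : exists2 w, w \in m y & minimal_point w.
Proof.
have [w wy min_w] := arg_minnP (fun w => #|m w|) (mem_minopen tau y).
exists w => //; apply/forall_inP => v vw.
have vy : v \in m y := subsetP (minopen_sub tau_top wy) v vw.
have /eqP -> : m v == m w by rewrite eqEcard minopen_sub // min_w.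
exact: mem_minopen.
Qed.

Lemma exists_class_rep_below y : exists2 r, r \in m y & class_rep r.
Proof.
have [w wy min_w] := exists_minimal_point_below y.
have [r rw least_r] := arg_minnP (fun r => val (enum_rank r)) (mem_minopen tau w).
have mrw := minimal_point_minopen min_w rw.
exists r; first exact: subsetP (minopen_sub tau_top wy) r rw.
apply/andP; split; apply/forall_inP => v; rewrite mrw => vw; last exact: least_r.
by rewrite (minimal_point_minopen min_w vw).
Qed.

Lemma class_rep_inj a b : class_rep a -> class_rep b -> a \in m b -> a = b.
Proof.
move=> /andP[_ /forall_inP least_a] /andP[min_b /forall_inP least_b] ab.
have ba : b \in m a by rewrite (minimal_point_minopen min_b ab) mem_minopen.
by apply/enum_rank_inj/val_inj/eqP; rewrite eqn_leq least_a ?least_b.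
Qed.

Definition flat_le x y := (x == y) || class_rep x && (x \in m y).

Lemma flat_le_refl : reflexive flat_le.
Proof. by move=> x; rewrite /flat_le eqxx. Qed.

Lemma flat_le_trans : transitive flat_le.
Proof.
move=> y x z /orP[/eqP-> // | /andP[rep_x xy]] /orP[/eqP<- | /andP[_ yz]].
  by rewrite /flat_le rep_x xy orbT.
by rewrite /flat_le rep_x (subsetP (minopen_sub tau_top yz) x xy) orbT.
Qed.

Definition flat_topology := downsets flat_le.

Lemma flat_topology_top : is_topology flat_topology.
Proof. exact: downsets_top. Qed.

Lemma minopen_flat y : minopen flat_topology y = [set x | flat_le x y].
Proof. exact: (minopen_downsets (@flat_le_refl) (@flat_le_trans)). Qed.

Lemma flat_le_minopen x y : flat_le x y -> x \in m y.
Proof. by case/orP => [/eqP -> | /andP[_ //]]; apply: mem_minopen. Qed.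

Lemma G2_flat x y : G2 flat_topology x y = G2 tau x y.
Proof.
rewrite (G2_minopenE flat_topology_top) (G2_minopenE tau_top) !minopen_flat.
congr (_ && _).
rewrite -!setI_eq0; apply/set0Pn/set0Pn => -[z]; rewrite !inE => /andP[zx zy].
- by exists z; rewrite !inE !flat_le_minopen.
- have [r rz rep_r] := exists_class_rep_below z.
  exists r; rewrite !inE /flat_le rep_r.
  by rewrite !(subsetP (minopen_sub tau_top _) r rz) ?orbT.
Qed.

Lemma height_flat : height flat_topology <= 2.
Proof.
apply: height_leq => -[|a [|b [|c s]]] //=.
rewrite !inE !minopen_flat negb_or => /andP[/andP[ab _] /andP[/norP[bc _] _]].
case/and3P=> /subsetP/(_ a) le_ab /subsetP/(_ b) le_bc _.
move: le_ab le_bc; rewrite !inE !flat_le_refl /flat_le (negbTE ab) (negbTE bc).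
move=> /(_ isT)/andP[rep_a amb] /(_ isT)/andP[rep_b _].
by case/eqP: ab; apply: class_rep_inj.
Qed.

End Flattening.

Theorem lemma3p5 (T : finType) (tau : {set {set T}}) :
  is_topology tau ->
  exists tau' : {set {set T}},
    [/\ is_topology tau', graph_iso (G2 tau) (G2 tau') & height tau' <= 2].
Proof.
move=> tau_top; exists (flat_topology tau); split.
- exact: flat_topology_top.
- by exists id; split; [exists id | move=> x y; rewrite G2_flat].
- exact: height_flat.
Qed.
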